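(* Let $\mathcal G=(\mathcal V,\mathcal E)$ be a connected graph on $n$ vertices, $M\ge2$, $\mathcal X=\{0,\dots,M-1\}$ with a group operation $+$. For $k\ge1$ define \[ \mathcal A_k=\Big\{\boldsymbol w\in\mathcal X^n,\ \boldsymbol w\neq\mathbf 0:\ \big|\{(i,j)\in\mathcal E: i>j,\ w_i-w_j\neq 0\}\big|<k\cdot\mathsf{mincut}\Big\}. \] Then for any $k\le n^2/\mathsf{mincut}$, \[ \frac{\log|\mathcal A_k|}{k}<2\log M+2\log(2k\cdot\mathsf{mincut})+4\tau^{\mathrm{cut}}\le2\log M+4\log(2n)+4\tau^{\mathrm{cut}}. \]
   Context: $x_i-x_j:=x_i+(-x_j)$, and $\mathbf 0$ denotes the vector whose entries are all the identity element $0$. $e(\mathcal S,\mathcal S^{\mathrm c})$ is the number of edges between $\mathcal S$ and $\mathcal V\setminus\mathcal S$; $\mathsf{mincut}=\min_{\emptyset\ne\mathcal S\subsetneq\mathcal V}e(\mathcal S,\mathcal S^{\mathrm c})$; $\mathcal N(m)=\{\mathcal S\subseteq\mathcal V:e(\mathcal S,\mathcal S^{\mathrm c})\le m\}$; $\tau^{\mathrm{cut}}=\max_k\frac1k\log|\mathcal N(k\cdot\mathsf{mincut})|$ over positive integers $k$. *)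

From HB Require Import structures.
From mathcomp Require Import all_boot all_order all_algebra all_fingroup.
From mathcomp Require Import classical_sets reals exp.
Set Implicit Arguments. Unset Strict Implicit. Unset Printing Implicit Defensive.
Import Order.TTheory GRing.Theory Num.Theory.

(* A simple undirected graph on the vertex set V = 'I_n is a symmetric,
   irreflexive relation e : rel 'I_n.  An undirected edge {i,j} is
   represented once, by the ordered pair (i,j) with e i j and i > j. *)

Definition cut_size (n : nat) (e : rel 'I_n) (S : {set 'I_n}) : nat :=
  #|[set p : 'I_n * 'I_n |
      [&& e p.1 p.2, (p.2 < p.1)%N & (p.1 \in S) != (p.2 \in S)]]|.

(* mincut = min over nonempty proper subsets S of e(S,S^c).  The default
   value n^2 of the fold is never reached when n >= 2 (the index set is then
   nonempty and every cut is < n^2). *)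
Definition mincut (n : nat) (e : rel 'I_n) : nat :=
  \big[minn/(n ^ 2)%N]_(S : {set 'I_n} | (S != finset.set0) && (S != [set: 'I_n])) cut_size e S.

Definition cutN (n : nat) (e : rel 'I_n) (m : nat) : {set {set 'I_n}} :=
  [set S : {set 'I_n} | (cut_size e S <= m)%N].

(* tau^cut = max over positive integers k of (1/k) log |N(k * mincut)|
   (stated as the supremum; the maximum is attained). *)
Definition tau_cut (R : realType) (n : nat) (e : rel 'I_n) : R :=
  sup [set (ln (#|cutN e (k * mincut e)|)%:R / k%:R)%R
      | k in [set k : nat | (0 < k)%N]].

(* A_k = { w in X^n, w <> 0 : |{(i,j) in E : i > j, w_i - w_j <> 0}| < k*mincut }
   for a finite group X (written multiplicatively: identity 1, w_i - w_j is
   w_i * w_j^-1). *)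
Definition Aset (gT : finGroupType) (n : nat) (e : rel 'I_n) (k : nat)
  : {set {ffun 'I_n -> gT}} :=
  [set w : {ffun 'I_n -> gT} |
     (w != [ffun=> 1%g]) &&
     (#|[set p : 'I_n * 'I_n |
          [&& e p.1 p.2, (p.2 < p.1)%N & (w p.1 * (w p.2)^-1 != 1)%g]]|
        < k * mincut e)%N].

From HB Require Import structures.
From mathcomp Require Import all_boot all_order all_algebra all_fingroup.
From mathcomp Require Import classical_sets reals exp.
From mathcomp Require Import ring lra.
Import Order.TTheory GRing.Theory Num.Theory.
Set Implicit Arguments. Unset Strict Implicit. Unset Printing Implicit Defensive.

(* Encode w by its family of level sets (w^-1(g))_g.  Every nonempty proper
   level set is a cut of size at least mincut, and the cut sizes of the level
   sets add up to twice the number of edges on which w varies; so for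
   w in A_k at most 2k level sets are nonempty and the sum of their "ranks"
   floor(cut/mincut)+1 is at most 4k.  Giving a set S of rank j the weight
   exp(-j tau)/M, every w in A_k has total weight at least M^-2k exp(-4k tau),
   while the total weight of all families is at most (sum_S weight S)^M
   <= (1 + k/M)^M <= e^k, because there are at most exp(j tau) sets of rank j.
   Hence |A_k| <= e^k M^2k exp(4k tau), and 1 < 2 log 2 <= 2 log(2k mincut). *)

Lemma leq_sum_in (T : finType) (A : {pred T}) (F : T -> nat) :
  (\sum_(t in A) F t <= \sum_t F t)%N.
Proof. by rewrite [X in (_ <= X)%N](bigID (mem A)) leq_addr. Qed.

Section LevelSets.
Variables (gT : finGroupType) (n : nat) (e : rel 'I_n).
Implicit Type w : {ffun 'I_n -> gT}.

Definition level w (g : gT) : {set 'I_n} := [set i | w i == g].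

Definition diff_edges w : {set 'I_n * 'I_n} :=
  [set p : 'I_n * 'I_n | [&& e p.1 p.2, (p.2 < p.1)%N & (w p.1 * (w p.2)^-1 != 1)%g]].

Definition values w : {set gT} := [set g | level w g != finset.set0].

Definition cut_rank (S : {set 'I_n}) : nat := (cut_size e S %/ mincut e).+1.

Lemma mincut_le_cut (S : {set 'I_n}) :
  S != finset.set0 -> S != [set: 'I_n] -> (mincut e <= cut_size e S)%N.
Proof. by move=> S0 ST; apply: (@bigmin_le_cond _ nat); rewrite S0. Qed.

Lemma cut_level_le w g : (cut_size e (level w g) <= #|diff_edges w|)%N.
Proof.
apply/subset_leq_card/fintype.subsetP => p; rewrite !inE => /and3P[-> -> cut_p] /=.
by rewrite divg_eq1; apply: contra cut_p => /eqP ->.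
Qed.

(* An edge on which w varies is cut exactly by the two level sets of its ends. *)
Lemma sum_cut_level w : (\sum_g cut_size e (level w g) = 2 * #|diff_edges w|)%N.
Proof.
have card_sum (T : finType) (A : {set T}) : #|A| = (\sum_t (t \in A))%N.
  by rewrite -sum1_card big_mkcond.
rewrite /cut_size; under eq_bigr => g _ do rewrite card_sum.
rewrite exchange_big card_sum big_distrr /=; apply: eq_bigr => p _.
under eq_bigr => g _ do rewrite !inE.
rewrite inE divg_eq1; case: (e p.1 p.2) (p.2 < p.1)%N => [] [] /=; try by rewrite big1.
case: (eqVneq (w p.1) (w p.2)) => [->|neq_w]; first by rewrite big1 // => g _; rewrite eqxx.
rewrite (bigD1 (w p.1)) // (bigD1 (w p.2)) 1?eq_sym //= !eqxx.
rewrite [w p.2 == _]eq_sym (negbTE neq_w).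
by rewrite big1 // => g /andP[/negbTE g1 /negbTE g2]; rewrite !(eq_sym _ g) g1 g2.
Qed.

Lemma level_neq_setT w g : (1 < #|values w|)%N -> level w g != [set: 'I_n].
Proof.
move=> values_gt1; apply: contraTneq values_gt1 => levelT; rewrite -leqNgt.
have /subset_leq_card : values w \subset [set g].
  apply/fintype.subsetP => h; rewrite !inE => /set0Pn[i].
  have : i \in level w g by rewrite levelT inE.
  by rewrite !inE => /eqP -> /eqP ->.
by rewrite cards1.
Qed.

Lemma card_values_mincut w :
  (1 < #|values w|)%N -> (#|values w| * mincut e <= 2 * #|diff_edges w|)%N.
Proof.
move=> values_gt1; rewrite -sum_cut_level -sum_nat_const.
apply: leq_trans (leq_sum_in _ _).
apply: leq_sum => g; rewrite inE => level0.
by rewrite mincut_le_cut // level_neq_setT.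
Qed.

Variables (k : nat) (w : {ffun 'I_n -> gT}).
Hypotheses (mincut_gt0 : (0 < mincut e)%N) (diff_lt : (#|diff_edges w| < k * mincut e)%N).

Lemma card_values_le : (#|values w| <= 2 * k)%N.
Proof.
have [values_gt1|] := ltnP 1 #|values w|; last first.
  by move/leq_trans; apply; case: k diff_lt.
rewrite -(leq_pmul2r mincut_gt0) (leq_trans (card_values_mincut values_gt1)) //.
by rewrite -mulnA leq_pmul2l // ltnW.
Qed.

Lemma sum_cut_rank_le : (\sum_(g in values w) cut_rank (level w g) <= 4 * k)%N.
Proof.
have sum_div_lt : (\sum_(g in values w) (cut_size e (level w g) %/ mincut e) < 2 * k)%N.
  rewrite -(ltn_pmul2r mincut_gt0) big_distrl /=.
  apply: leq_ltn_trans (_ : _ <= \sum_(g in values w) cut_size e (level w g))%N _.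
    by apply: leq_sum => g _; apply: leq_divM.
  apply: leq_ltn_trans (leq_sum_in _ _) _.
  by rewrite sum_cut_level -mulnA ltn_pmul2l.
under eq_bigr => g _ do rewrite /cut_rank -addn1.
rewrite big_split sum_nat_const muln1 /= (_ : 4 * k = 2 * k + 2 * k)%N; last first.
  by rewrite -mulnDl.
by rewrite leq_add ?card_values_le // ltnW.
Qed.

End LevelSets.

Local Open Scope ring_scope.
Local Notation expR := sequences.expR.

Section CutEntropy.
Variables (R : realType) (n : nat) (e : rel 'I_n).

Lemma card_cutN_gt0 m : (0 < #|cutN e m|)%N.
Proof.
apply/card_gt0P; exists finset.set0; rewrite inE (_ : cut_size e _ = 0%N) //.
by apply/eqP; rewrite cards_eq0; apply/eqP/setP => p; rewrite !inE !andbF.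
Qed.

Lemma ln_card_cutN_le j : (0 < j)%N ->
  ln (#|cutN e (j * mincut e)|%:R) / j%:R <= tau_cut R e.
Proof.
move=> j_gt0; apply: ub_le_sup; last by exists j.
exists (ln (#|{set 'I_n}|%:R : R)) => _ [i /= i_gt0 <-].
have cutN_gt0 := card_cutN_gt0 (i * mincut e).
apply: (@le_trans _ _ (ln (#|cutN e (i * mincut e)|%:R : R))).
  by rewrite ler_pdivrMr ?ltr0n // ler_peMr ?ler1n // ln_ge0 ?ler1n.
by rewrite ler_ln ?posrE ?ltr0n ?ler_nat ?max_card // (leq_trans cutN_gt0) ?max_card.
Qed.

Lemma tau_cut_ge0 : 0 <= tau_cut R e.
Proof.
apply: le_trans (ln_card_cutN_le (ltn0Sn 0)).
by rewrite divr1 ln_ge0 // ler1n card_cutN_gt0.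
Qed.

Lemma card_cutN_le_expR j : (0 < j)%N ->
  (#|cutN e (j * mincut e)|%:R : R) <= expR (j%:R * tau_cut R e).
Proof.
move=> j_gt0; rewrite -[X in X <= _]lnK ?posrE ?ltr0n ?card_cutN_gt0 // ler_expR.
by rewrite mulrC -ler_pdivrMr ?ltr0n // ln_card_cutN_le.
Qed.

End CutEntropy.

Section LevelSetWeights.
Variables (R : realType) (gT : finGroupType) (n : nat) (e : rel 'I_n) (k : nat).
Hypothesis mincut_gt0 : (0 < mincut e)%N.

Local Notation M := (#|gT|%:R : R).
Local Notation x := (expR (- tau_cut R e)).

Definition weight (S : {set 'I_n}) : R :=
  if S == finset.set0 then 1
  else if (cut_size e S < k * mincut e)%N then M^-1 * x ^+ cut_rank e S else 0.

Lemma card_group_ge1 : 1 <= M.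
Proof. by rewrite ler1n; apply/card_gt0P; exists 1%g. Qed.

Lemma card_group_gt0 : 0 < M.
Proof. exact: lt_le_trans ltr01 card_group_ge1. Qed.

Lemma expR_Ntau_le1 : x <= 1.
Proof. by rewrite -expR0 ler_expR oppr_le0 tau_cut_ge0. Qed.

Lemma weight_ge0 S : 0 <= weight S.
Proof.
rewrite /weight; case: ifP => // _; case: ifP => // _.
by rewrite mulr_ge0 ?exprn_ge0 ?expR_ge0 // invr_ge0 ltW // card_group_gt0.
Qed.

Lemma prod_weight_level_ge w : w \in Aset gT e k ->
  M^-1 ^+ (2 * k) * x ^+ (4 * k) <= \prod_g weight (level w g).
Proof.
rewrite inE => /andP[_ diff_lt].
rewrite (bigID (mem (values w))) /= [X in _ <= _ * X]big1 ?mulr1; last first.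
  by move=> g; rewrite inE negbK => /eqP->; rewrite /weight eqxx.
rewrite (eq_bigr (fun g => M^-1 * x ^+ cut_rank e (level w g))); last first.
  move=> g; rewrite inE /weight => /negbTE->.
  by rewrite (leq_ltn_trans (cut_level_le e w g) diff_lt).
have Minv_ge0 : 0 <= M^-1 by rewrite invr_ge0 ltW // card_group_gt0.
have Minv_le1 : M^-1 <= 1 by rewrite invf_le1 ?card_group_gt0 ?card_group_ge1.
rewrite big_split prodr_const prodrXr /=.
apply: ler_pM; rewrite ?exprn_ge0 ?expR_ge0 //.
  by rewrite ler_wiXn2l // (card_values_le mincut_gt0 diff_lt).
by rewrite ler_wiXn2l ?expR_ge0 ?expR_Ntau_le1 // (sum_cut_rank_le mincut_gt0 diff_lt).
Qed.

(* The sets of rank j + 1 lie in N((j + 1) mincut), of size at most exp((j + 1) tau). *)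
Lemma sum_weight_le : \sum_S weight S <= 1 + k%:R / M.
Proof.
rewrite (bigD1 finset.set0) //= {1}/weight eqxx lerD2l.
pose small S := if (cut_size e S < k * mincut e)%N then x ^+ cut_rank e S else 0.
have small_ge0 S : 0 <= small S by rewrite /small; case: ifP; rewrite ?exprn_ge0 ?expR_ge0.
rewrite (eq_bigr (fun S => M^-1 * small S)); last first.
  by move=> S /negbTE S0; rewrite /weight /small S0; case: ifP; rewrite ?mulr0.
rewrite -mulr_sumr mulrC; apply: ler_wpM2r; first by rewrite invr_ge0 ltW // card_group_gt0.
apply: le_trans (_ : \sum_S small S <= _).
  by rewrite [X in _ <= X](bigD1 finset.set0) //= lerDr small_ge0.
pose term (S : {set 'I_n}) (j : 'I_k) : R :=
  if S \in cutN e (j.+1 * mincut e) then x ^+ j.+1 else 0.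
have term_ge0 S j : 0 <= term S j by rewrite /term; case: ifP; rewrite ?exprn_ge0 ?expR_ge0.
apply: le_trans (_ : \sum_S \sum_(j < k) term S j <= _).
  apply: ler_sum => S _; rewrite /small; case: ifP => [cut_lt|_]; last exact: sumr_ge0.
  have rank_lt : ((cut_rank e S).-1 < k)%N by rewrite ltn_divLR.
  rewrite (bigD1 (Ordinal rank_lt)) //= /term inE ltnW ?ltn_ceil //.
  by rewrite lerDl sumr_ge0 // => i _; apply: term_ge0.
rewrite exchange_big /= -[k in k%:R]card_ord -sumr_const.
apply: ler_sum => j _; rewrite -big_mkcond sumr_const -mulr_natl /=.
apply: le_trans (ler_wpM2r (exprn_ge0 _ (expR_ge0 _)) (card_cutN_le_expR R e (ltn0Sn j))) _.
by rewrite -expRM_natl -expRD mulrN subrr expR0.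
Qed.

Lemma level_inj : injective (fun w : {ffun 'I_n -> gT} => [ffun g => level w g]).
Proof.
move=> w1 w2 /ffunP eq_level; apply/ffunP => i.
by have /setP/(_ i) := eq_level (w1 i); rewrite !ffunE !inE eqxx => /esym/eqP.
Qed.

Lemma sum_prod_weight_level_le :
  \sum_(w in Aset gT e k) \prod_g weight (level w g) <= (\sum_S weight S) ^+ #|gT|.
Proof.
set enc := fun w : {ffun 'I_n -> gT} => [ffun g => level w g].
rewrite (eq_bigr (fun w => \prod_g weight (enc w g))); last first.
  by move=> w _; apply: eq_bigr => g _; rewrite ffunE.
pose prod_weight (f : {ffun gT -> {set 'I_n}}) := \prod_g weight (f g).
rewrite -(big_imset prod_weight (in2W level_inj)) /=.
rewrite -prodr_const (bigA_distr_bigA (fun _ : gT => weight)) /=.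
rewrite [X in _ <= X](bigID (mem (enc @: Aset gT e k))) /= lerDl.
by apply: sumr_ge0 => f _; apply: prodr_ge0 => g _; apply: weight_ge0.
Qed.

Lemma card_Aset_le_expR :
  (#|Aset gT e k|%:R : R) <= expR (k%:R * (1 + 2 * ln M + 4 * tau_cut R e)).
Proof.
have total_weight_le : \sum_(w in Aset gT e k) \prod_g weight (level w g) <= expR k%:R.
  apply: le_trans sum_prod_weight_level_le _.
  apply: le_trans (_ : expR (k%:R / M) ^+ #|gT| <= _); last first.
    by rewrite -expRM_natl mulrC divfK // gt_eqF ?card_group_gt0.
  apply: lerXn2r; rewrite ?nnegrE ?expR_ge0 ?sumr_ge0 //; last first.
    exact: le_trans sum_weight_le (expR_ge1Dx _).
  by move=> S _; apply: weight_ge0.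
have weight_lowerE : M^-1 ^+ (2 * k) * x ^+ (4 * k) =
    expR (- (2 * k%:R * ln M + 4 * k%:R * tau_cut R e)).
  rewrite -[M in M^-1](lnK (card_group_gt0 : M \is Num.pos)) -expRN.
  rewrite -!expRM_natl -expRD !natrM.
  by congr expR; ring.
have := le_trans (ler_sum _ prod_weight_level_ge) total_weight_le.
rewrite sumr_const -[_ *+ _]mulr_natl weight_lowerE expRN ler_pdivrMr ?expR_gt0 //.
by move/le_trans; apply; rewrite -expRD ler_expR; lra.
Qed.

Lemma ln_card_Aset_le : (0 < k)%N ->
  ln (#|Aset gT e k|%:R : R) / k%:R <= 1 + 2 * ln M + 4 * tau_cut R e.
Proof.
move=> k_gt0; rewrite ler_pdivrMr ?ltr0n // mulrC.
have [->|A_gt0] := posnP #|Aset gT e k|.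
  have := ln_ge0 card_group_ge1; have := tau_cut_ge0 R e.
  by move=> tau_ge0 lnM_ge0; rewrite ln0 // mulr_ge0 ?ler0n //; lra.
by rewrite -ler_expR lnK ?posrE ?ltr0n // card_Aset_le_expR.
Qed.

End LevelSetWeights.

Lemma ln_le_2ln (R : realType) (a b : R) :
  0 < a -> 0 < b -> a <= b ^+ 2 -> ln a <= 2 * ln b.
Proof.
move=> a_gt0 b_gt0 a_le.
by rewrite -[2]/(2%:R) mulr_natl -lnXn // ler_ln ?posrE ?exprn_gt0.
Qed.

Lemma half_lt_ln2 (R : realType) : 1 / 2 < ln (2 : R).
Proof.
have expR_half_lt2 : expR (1 / 2 : R) < 2.
  have := @expR_gt1Dx R (- (1 / 2)); rewrite oppr_eq0 div1r invr_eq0 pnatr_eq0.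
  move=> /(_ isT); rewrite expRN (_ : 1 + - 2^-1 = 2^-1 :> R); last by field.
  by rewrite ltf_pV2 ?posrE ?expR_gt0.
by rewrite -[X in X < _](expRK (1 / 2)) ltr_ln ?posrE ?expR_gt0.
Qed.

Theorem lemma3 (R : realType) (gT : finGroupType) (n : nat) (e : rel 'I_n)
  (e_sym : symmetric e) (e_irr : irreflexive e)
  (e_conn : forall x y : 'I_n, connect e x y)
  (n_ge2 : (2 <= n)%N) (M_ge2 : (2 <= #|gT|)%N)
  (k : nat) (k_gt0 : (0 < k)%N)
  (k_le : (k%:R : R) <= (n ^ 2)%:R / (mincut e)%:R) :
  ln (#|Aset gT e k|%:R : R) / k%:R
    < 2 * ln (#|gT|%:R) + 2 * ln ((2 * k * mincut e)%:R) + 4 * tau_cut R e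
  /\
  2 * ln (#|gT|%:R) + 2 * ln ((2 * k * mincut e)%:R) + 4 * tau_cut R e
    <= 2 * ln (#|gT|%:R) + 4 * ln ((2 * n)%:R) + 4 * tau_cut R e.
Proof.
have mincut_gt0 : (0 < mincut e)%N.
  by move: k_le; rewrite lt0n; apply: contraTneq => ->; rewrite invr0 mulr0 -ltNge ltr0n.
have kmc_le : (k * mincut e <= n ^ 2)%N.
  by move: k_le; rewrite ler_pdivlMr ?ltr0n // -natrM ler_nat.
have kmc_gt0 : (0 < 2 * k * mincut e)%N by rewrite !muln_gt0 k_gt0 mincut_gt0.
have ln2_le : ln (2 : R) <= ln ((2 * k * mincut e)%:R).
  by rewrite ler_ln ?posrE ?ltr0n // ler_nat -mulnA leq_pmulr // muln_gt0 k_gt0.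
have ln_kmc_le : ln ((2 * k * mincut e)%:R : R) <= 2 * ln ((2 * n)%:R).
  rewrite ln_le_2ln ?ltr0n ?kmc_gt0 ?muln_gt0 ?(ltnW n_ge2) // -natrX ler_nat.
  by rewrite -mulnA expnMn leq_mul.
have := ln_card_Aset_le R gT mincut_gt0 k_gt0.
have := half_lt_ln2 R; split; lra.
Qed.
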